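(* Let $D, N \in \mathbb{N}^+$, let $\mathbf{W} = [\mathbf{w}_1, \dots, \mathbf{w}_N] \in \mathbb{R}^{D\times N}$ be arbitrary, and let $\mathbf{f}_t, \mathbf{f}_s \in \mathbb{R}^D$ be nonzero vectors with the same direction, i.e. $\mathbf{f}_s = c\,\mathbf{f}_t$ for some $c>0$. Define, for $\mathbf{f}, \mathbf{g} \in \mathbb{R}^D$, $$\mathcal{L}_{lsh}(\mathbf{f}, \mathbf{g}) = -\frac{1}{N}\sum_{j=1}^{N}\big[h_j \log p_j + (1-h_j)\log(1-p_j)\big],\quad h_j = \operatorname{sign}(\mathbf{w}_j^{\mathsf{T}}\mathbf{f}),\ p_j = \sigma(\mathbf{w}_j^{\mathsf{T}}\mathbf{g}),$$ where $\operatorname{sign}(x) = 1$ if $x>0$ and $\operatorname{sign}(x)=0$ otherwise, and $\sigma(x) = 1/(1+e^{-x})$. Then for every $s>1$, $$\mathcal{L}_{lsh}(\mathbf{f}_t, s\,\mathbf{f}_s) \le \mathcal{L}_{lsh}(\mathbf{f}_t, \mathbf{f}_s).$$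
   Context: This is the locality-sensitive-hashing (LSH) loss with zero bias: the teacher feature $\mathbf{f}_t$ is hashed into binary codes $h_j$ by the random hyperplanes $\mathbf{w}_j$, and the student feature $\mathbf{f}_s$ is scored by the binary cross-entropy against these codes. *)

From mathcomp Require Import all_boot all_order all_algebra.
From mathcomp Require Import all_classical all_reals all_analysis.
Set Implicit Arguments. Unset Strict Implicit. Unset Printing Implicit Defensive.
Import Order.TTheory GRing.Theory Num.Theory.
Local Open Scope ring_scope.

Definition hsign {R : realType} (x : R) : R := if 0 < x then 1 else 0.

Definition sigmoid {R : realType} (x : R) : R := (1 + expR (- x))^-1.

Definition proj {R : realType} {D N : nat} (W : 'M[R]_(D, N)) (j : 'I_N)
  (f : 'cV[R]_D) : R := \sum_(i < D) W i j * f i ord0.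

Definition L_lsh {R : realType} {D N : nat} (W : 'M[R]_(D, N))
  (f g : 'cV[R]_D) : R :=
  - (N%:R)^-1 * \sum_(j < N)
      (hsign (proj W j f) * ln (sigmoid (proj W j g))
       + (1 - hsign (proj W j f)) * ln (1 - sigmoid (proj W j g))).

(* Proof idea: the loss is a sum of per-coordinate binary cross-entropies.
   Along the ray [k *: f] the logit of coordinate j is [k * a] with
   [a = w_j^T f], so increasing [k] pushes the logit further to the side of
   [0] that carries the label [sign a]; since the sigmoid is monotone, each
   log-likelihood term can only grow, hence the loss can only drop. *)
From Pilot Require Import Defs.
From mathcomp Require Import all_boot all_order all_algebra.
From mathcomp Require Import all_classical all_reals all_analysis.
Import Order.TTheory GRing.Theory Num.Theory.
Local Open Scope ring_scope.

Section Sigmoid.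
Variable R : realType.

Lemma sigmoid_gt0 (x : R) : 0 < sigmoid x.
Proof. by rewrite /sigmoid invr_gt0 addr_gt0 ?ltr01 ?expR_gt0. Qed.

Lemma sigmoid_lt1 (x : R) : sigmoid x < 1.
Proof.
rewrite /sigmoid invf_lt1; last by rewrite addr_gt0 ?ltr01 ?expR_gt0.
by rewrite ltrDl expR_gt0.
Qed.

Lemma ler_sigmoid : {homo @sigmoid R : x y / x <= y}.
Proof.
move=> x y le_xy; rewrite /sigmoid lef_pV2 ?posrE ?addr_gt0 ?ltr01 ?expR_gt0 //.
by rewrite lerD2l ler_expR lerN2.
Qed.

Definition bce (h z : R) : R :=
  h * ln (sigmoid z) + (1 - h) * ln (1 - sigmoid z).

Lemma bce_hsign_scale (a k k' : R) : 0 <= k -> k <= k' ->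
  bce (hsign a) (k * a) <= bce (hsign a) (k' * a).
Proof.
move=> k_ge0 le_kk'; rewrite /bce /hsign; case: ifPn => [a_gt0 | a_le0].
- rewrite subrr !mul0r !addr0 !mul1r ler_ln ?posrE ?sigmoid_gt0 //.
  by apply: ler_sigmoid; rewrite ler_pM2r.
- rewrite subr0 !mul0r !add0r !mul1r.
  rewrite ler_ln ?posrE ?subr_gt0 ?sigmoid_lt1 // lerD2l lerN2.
  by apply: ler_sigmoid; rewrite ler_wnM2r // leNgt.
Qed.

End Sigmoid.

Lemma projZ (R : realType) (D N : nat) (W : 'M[R]_(D, N)) j k f :
  Defs.proj W j (k *: f) = k * Defs.proj W j f.
Proof. by rewrite /proj mulr_sumr; apply: eq_bigr => i _; rewrite mxE mulrCA. Qed.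

Lemma L_lsh_scale (R : realType) (D N : nat) (W : 'M[R]_(D, N))
    (f : 'cV[R]_D) (k k' : R) :
  0 <= k -> k <= k' -> L_lsh W f (k' *: f) <= L_lsh W f (k *: f).
Proof.
move=> k_ge0 le_kk'; rewrite /L_lsh !mulNr lerN2.
rewrite ler_wpM2l ?invr_ge0 ?ler0n //; apply: ler_sum => j _.
by rewrite !projZ; exact: bce_hsign_scale.
Qed.

Theorem claim2 (R : realType) (D N : nat) (hD : (0 < D)%N) (hN : (0 < N)%N)
  (W : 'M[R]_(D, N)) (ft fs : 'cV[R]_D) (c : R)
  (hft : ft != 0) (hfs : fs != 0) (hc : 0 < c) (hdir : fs = c *: ft)
  (s : R) (hs : 1 < s) :
  L_lsh W ft (s *: fs) <= L_lsh W ft fs.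
Proof.
rewrite hdir scalerA; apply: L_lsh_scale; first exact: ltW.
by rewrite ler_peMl ?ltW.
Qed.
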